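(* Let $\mathcal{A}=\mathcal{R}*_K\mathcal{S}*_L\mathcal{T}\in\mathbb{C}^{I_1\times\cdots\times I_N\times J_1\times\cdots\times J_M}$, where $\mathcal{R}\in\mathbb{C}^{I_1\times\cdots\times I_N\times H_1\times\cdots\times H_K}$, $\mathcal{S}\in\mathbb{C}^{H_1\times\cdots\times H_K\times G_1\times\cdots\times G_L}$ and $\mathcal{T}\in\mathbb{C}^{G_1\times\cdots\times G_L\times J_1\times\cdots\times J_M}$, and put $\mathcal{B}=\mathcal{T}^{\dagger}*_L(\mathcal{A}*_M\mathcal{T}^{\dagger})^{\dagger}$ and $\mathcal{C}=(\mathcal{R}^{\dagger}*_N\mathcal{A})^{\dagger}*_K\mathcal{R}^{\dagger}$. (i) The product Moore–Penrose inverse of $\mathcal{A}$ relative to the factorization $\mathcal{A}=\mathcal{A}*_M(\mathcal{A}^{\dagger}*_N\mathcal{A}*_M\mathcal{T}^{\dagger})*_L\mathcal{T}$ (i.e. with $\mathcal{A}$, $\mathcal{A}^{\dagger}*_N\mathcal{A}*_M\mathcal{T}^{\dagger}$, $\mathcal{T}$ in the roles of the three factors) equals $\mathcal{B}$. (ii) The product Moore–Penrose inverse of $\mathcal{A}$ relative to the factorization $\mathcal{A}=\mathcal{R}*_K(\mathcal{R}^{\dagger}*_N\mathcal{A}*_M\mathcal{A}^{\dagger})*_N\mathcal{A}$ (i.e. with $\mathcal{R}$, $\mathcal{R}^{\dagger}*_N\mathcal{A}*_M\mathcal{A}^{\dagger}$, $\mathcal{A}$ in the roles of the three factors) equals $\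mathcal{C}$.
   Context: $\mathbb{C}^{I_1\times\cdots\times I_N}$ denotes the set of complex tensors of order $N$ and dimension $I_1\times\cdots\times I_N$. For $\mathcal{A}\in\mathbb{C}^{I_1\times\cdots\times I_N\times K_1\times\cdots\times K_N}$ and $\mathcal{B}\in\mathbb{C}^{K_1\times\cdots\times K_N\times J_1\times\cdots\times J_M}$, the Einstein product $\mathcal{A}*_N\mathcal{B}$ is defined by $(\mathcal{A}*_N\mathcal{B})_{i_1\dots i_N j_1\dots j_M}=\sum_{k_1,\dots,k_N}a_{i_1\dots i_N k_1\dots k_N}b_{k_1\dots k_N j_1\dots j_M}$; it is associative. $\mathcal{A}^H$ denotes the conjugate transpose. For $\mathcal{A}\in\mathbb{C}^{I_1\times\cdots\times I_N\times J_1\times\cdots\times J_M}$ the Moore–Penrose inverse $\mathcal{A}^{\dagger}$ is the unique $\mathcal{X}\in\mathbb{C}^{J_1\times\cdots\times J_M\times I_1\times\cdots\times I_N}$ with $\mathcal{A}*_M\mathcal{X}*_N\mathcal{A}=\mathcal{A}$, $\mathcal{X}*_N\mathcal{A}*_M\mathcal{X}=\mathcal{X}$, $(\mathcal{A}*_M\mathcal{X})^H=\mathcal{A}*_M\mathcal{X}$, $(\mathcal{X}*_N\mathcal{A})^H=\mathcal{X}*_N\mathcal{A}$. Given a factorization $\mathcal{A}=\mathcal{P}*_{k}\mathcal{Q}*_{l}\mathcal{U}$ with $\mathcal{P}$ having last $k$ modes equal to the first $k$ modes of $\mathcal{Q}$, $\mathcal{Q}$ having last $l$ modes equal to the first $l$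 modes of $\mathcal{U}$, $\mathcal{P}$ sharing its first $N$ modes with $\mathcal{A}$ and $\mathcal{U}$ sharing its last $M$ modes with $\mathcal{A}$, the product Moore–Penrose inverse of $\mathcal{A}$ relative to this factorization is $\mathcal{U}^{\dagger}*_{l}(\mathcal{P}^{\dagger}*_N\mathcal{A}*_M\mathcal{U}^{\dagger})^{\dagger}*_{k}\mathcal{P}^{\dagger}$. *)

From HB Require Import structures.
From mathcomp Require Import all_boot all_order all_algebra.
From Stdlib Require Import ClassicalEpsilon.
Set Implicit Arguments. Unset Strict Implicit. Unset Printing Implicit Defensive.
Import Order.TTheory GRing.Theory Num.Theory.
Local Open Scope ring_scope.

Definition idx (d : seq nat) := {dffun forall k : 'I_(size d), 'I_(nth 0%N d k)}.

Section Tensors.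
Variable C : numClosedFieldType.

(* A tensor in C^{I_1 x ... x I_N x J_1 x ... x J_M}, with the modes split as
   (first N modes, shape I) and (last M modes, shape J). *)
Definition tensor (I J : seq nat) := idx I -> idx J -> C.

Definition einstein (I K J : seq nat) (A : tensor I K) (B : tensor K J)
  : tensor I J := fun i j => \sum_(k : idx K) A i k * B k j.

Definition ctrans (I J : seq nat) (A : tensor I J) : tensor J I :=
  fun j i => (A i j)^*.

Definition is_MP (I J : seq nat) (A : tensor I J) (X : tensor J I) : Prop :=
  [/\ einstein (einstein A X) A = A,
      einstein (einstein X A) X = X,
      ctrans (einstein A X) = einstein A X &
      ctrans (einstein X A) = einstein X A].

(* The Moore-Penrose inverse: the (unique, existing) X satisfying the Penrose
   equations, selected by classical choice. *)
Definition MPinv (I J : seq nat) (A : tensor I J) : tensor J I :=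
  epsilon (inhabits (fun _ _ => 0)) (is_MP A).

Definition prodMP (I K L J : seq nat)
  (P : tensor I K) (Q : tensor K L) (U : tensor L J) (A : tensor I J)
  : tensor J I :=
  einstein (einstein (MPinv U)
                     (MPinv (einstein (einstein (MPinv P) A) (MPinv U))))
           (MPinv P).
End Tensors.

(* Under the Einstein product, tensors are matrices indexed by multi-indices,
   so it suffices to work with Moore-Penrose inverses of complex matrices.
   There (ab)^+ = (a^+ a b)^+ a^+ as soon as a b b^+ = a, and dually
   (ab)^+ = b^+ (a b b^+)^+ as soon as a^+ a b = b: the candidates satisfy
   the Penrose equations because Hermitian matrices P, Q with PQ = Q and
   QP = P are equal (P = P^* = (QP)^* = PQ = Q).  For A = R S T we have
   A T^+ T = A, which gives (i) with a = A and b = T^+, and R R^+ A = A,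
   which gives (ii) with a = R^+ and b = A. *)

From mathcomp Require Import all_boot all_order all_algebra.
From Stdlib Require Import FunctionalExtensionality ClassicalEpsilon.
Set Implicit Arguments. Unset Strict Implicit. Unset Printing Implicit Defensive.
Import GRing.Theory.
Local Open Scope ring_scope.
Local Open Scope sesquilinear_scope.

Section MoorePenroseMatrix.
Variable C : numClosedFieldType.

Lemma trmxC_mul m n p (A : 'M[C]_(m, n)) (B : 'M_(n, p)) :
  (A *m B)^t* = B^t* *m A^t*.
Proof. by rewrite trmx_mul map_mxM. Qed.

Lemma mulmx_trmxC_eq0 m n (B : 'M[C]_(m, n)) : B *m B^t* = 0 -> B = 0.
Proof.
move=> /orthomx1P /orthomx_disj BB0.
by apply/eqP; rewrite -submx0 -BB0 sub_capmx submx_refl.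
Qed.

Lemma gram_mulmxKr m n p (A : 'M[C]_(m, n)) (U V : 'M_(p, n)) :
  U *m A^t* *m A = V *m A^t* *m A -> U *m A^t* = V *m A^t*.
Proof.
move=> eqUV; apply/eqP; rewrite -subr_eq0 -mulmxBl; apply/eqP/mulmx_trmxC_eq0.
by rewrite trmxC_mul trmxCK mulmxA !mulmxBl eqUV subrr.
Qed.

Lemma normal_eq_solvable m n (A : 'M[C]_(m, n)) :
  exists Y, A^t* *m A *m Y = A^t*.
Proof.
set G := A^t* *m A.
have GFG : G *m pinvmx G *m G = G := mulmxKpV (submx_refl G).
exists (pinvmx G *m A^t*); rewrite mulmxA -[in RHS](mul1mx (A^t*)).
by apply: gram_mulmxKr; rewrite mul1mx -mulmxA.
Qed.

Lemma mxinv13_exists m n (A : 'M[C]_(m, n)) :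
  exists Y, A *m Y *m A = A /\ (A *m Y)^t* = A *m Y.
Proof.
have [Y normY] := normal_eq_solvable A.
have PtP : (A *m Y)^t* *m (A *m Y) = (A *m Y)^t*.
  by rewrite trmxC_mul -mulmxA [A^t* *m _]mulmxA normY.
have hermP : (A *m Y)^t* = A *m Y.
  by have := congr1 (fun M => M^t*) PtP; rewrite /= trmxC_mul trmxCK PtP.
exists Y; split=> //.
by rewrite -hermP -[in RHS](trmxCK A) -normY !trmxC_mul trmxCK mulmxA.
Qed.

Lemma mxinv14_exists m n (A : 'M[C]_(m, n)) :
  exists Z, A *m Z *m A = A /\ (Z *m A)^t* = Z *m A.
Proof.
have [Y [AYA hermAY]] := mxinv13_exists (A^t*).
exists (Y^t*); split.
  by rewrite -[in RHS](trmxCK A) -AYA !trmxC_mul trmxCK mulmxA.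
by rewrite -[A in (Y^t*) *m A]trmxCK -trmxC_mul hermAY.
Qed.

Definition is_mxMP m n (A : 'M[C]_(m, n)) (X : 'M_(n, m)) : Prop :=
  [/\ A *m X *m A = A, X *m A *m X = X,
      (A *m X)^t* = A *m X & (X *m A)^t* = X *m A].

Lemma is_mxMP_sym m n (A : 'M[C]_(m, n)) X : is_mxMP A X -> is_mxMP X A.
Proof. by case. Qed.

Lemma is_mxMP_exists m n (A : 'M[C]_(m, n)) : exists X, is_mxMP A X.
Proof.
have [Y [AYA hermAY]] := mxinv13_exists A.
have [Z [AZA hermZA]] := mxinv14_exists A.
have AZAY : A *m (Z *m A *m Y) = A *m Y by rewrite !mulmxA AZA.
have ZAYA : Z *m A *m Y *m A = Z *m A by rewrite -[in RHS]AYA !mulmxA.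
exists (Z *m A *m Y); split.
- by rewrite AZAY.
- by rewrite ZAYA -mulmxA AZAY mulmxA.
- by rewrite AZAY.
- by rewrite ZAYA.
Qed.

Lemma is_mxMP_uniq m n (A : 'M[C]_(m, n)) X Y :
  is_mxMP A X -> is_mxMP A Y -> X = Y.
Proof.
case=> AXA XAX hermAX hermXA [AYA YAY hermAY hermYA].
have AXAY : A *m X *m (A *m Y) = A *m X.
  by rewrite -hermAX -hermAY -trmxC_mul mulmxA AYA.
have XAYA : X *m A *m (Y *m A) = Y *m A.
  by rewrite -hermXA -hermYA -trmxC_mul -!mulmxA [A *m (X *m A)]mulmxA AXA.
have -> : X = X *m A *m Y by rewrite -{1}XAX -mulmxA -AXAY !mulmxA XAX.
by rewrite -[in RHS]YAY -XAYA -!mulmxA [Y *m (A *m Y)]mulmxA YAY.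
Qed.

Definition mpinv m n (A : 'M[C]_(m, n)) : 'M_(n, m) :=
  epsilon (inhabits 0) (is_mxMP A).

Lemma mpinvP m n (A : 'M[C]_(m, n)) : is_mxMP A (mpinv A).
Proof. exact: epsilon_spec (is_mxMP_exists A). Qed.

Lemma mpinv_unique m n (A : 'M[C]_(m, n)) X : is_mxMP A X -> mpinv A = X.
Proof. exact: is_mxMP_uniq (mpinvP A). Qed.

Lemma mpinvK m n (A : 'M[C]_(m, n)) : mpinv (mpinv A) = A.
Proof. exact: mpinv_unique (is_mxMP_sym (mpinvP A)). Qed.

Lemma mulmx_mpinvKr m n p (x : 'M[C]_(m, n)) (a : 'M_(n, p)) :
  x *m a *m mpinv a *m a = x *m a.
Proof.
by case: (mpinvP a) => aaia _ _ _; rewrite -!mulmxA [a *m _]mulmxA aaia.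
Qed.

Lemma mulmx_mpinvKl m n p (a : 'M[C]_(m, n)) (x : 'M_(n, p)) :
  a *m mpinv a *m (a *m x) = a *m x.
Proof. by case: (mpinvP a) => aaia _ _ _; rewrite mulmxA aaia. Qed.

Lemma mpinvMr m n p (a : 'M[C]_(m, n)) (b : 'M_(n, p)) :
  a *m b *m mpinv b = a ->
  mpinv (a *m b) = mpinv (mpinv a *m a *m b) *m mpinv a.
Proof.
move=> abb; set ai := mpinv a; set Y := ai *m a *m b; set w := mpinv Y.
have [aaia aiaai hermaai hermaia] : is_mxMP a ai := mpinvP a.
have [YwY wYw hermYw hermwY] : is_mxMP Y w := mpinvP Y.
have aY : a *m Y = a *m b by rewrite /Y !mulmxA aaia.
have Ybi : Y *m mpinv b = ai *m a.
  by rewrite /Y -!mulmxA [a *m (b *m _)]mulmxA abb.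
have aiaY : ai *m a *m Y = Y by rewrite /Y !mulmxA aiaai.
have QP : Y *m w *m (ai *m a) = ai *m a by rewrite -Ybi mulmxA YwY.
have PQ : ai *m a *m (Y *m w) = Y *m w by rewrite mulmxA aiaY.
have Yw : Y *m w = ai *m a.
  by rewrite -[RHS]hermaia -QP trmxC_mul hermaia hermYw PQ.
have abX : a *m b *m (w *m ai) = a *m ai.
  by rewrite -aY -mulmxA [Y *m _]mulmxA Yw aiaai.
have Xab : w *m ai *m (a *m b) = w *m Y by rewrite /Y !mulmxA.
apply: mpinv_unique; split.
- by rewrite abX mulmxA aaia.
- by rewrite Xab mulmxA wYw.
- by rewrite abX.
- by rewrite Xab.
Qed.

Lemma mpinvMl m n p (a : 'M[C]_(m, n)) (b : 'M_(n, p)) :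
  mpinv a *m a *m b = b ->
  mpinv (a *m b) = mpinv b *m mpinv (a *m b *m mpinv b).
Proof.
move=> aiab; set bi := mpinv b; set Z := a *m b *m bi; set w := mpinv Z.
have [bbib bibbi hermbbi hermbib] : is_mxMP b bi := mpinvP b.
have [ZwZ wZw hermZw hermwZ] : is_mxMP Z w := mpinvP Z.
have Zb : Z *m b = a *m b by rewrite /Z -!mulmxA [b *m _]mulmxA bbib.
have aiZ : mpinv a *m Z = b *m bi by rewrite /Z !mulmxA aiab.
have QP : w *m Z *m (b *m bi) = w *m Z by rewrite -mulmxA [Z *m _]mulmxA Zb.
have PQ : b *m bi *m (w *m Z) = b *m bi.
  by rewrite -aiZ -mulmxA [Z *m _]mulmxA ZwZ.
have wZ : w *m Z = b *m bi.
  by rewrite -[LHS]hermwZ -QP trmxC_mul hermwZ hermbbi PQ.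
have abX : a *m b *m (bi *m w) = Z *m w by rewrite mulmxA.
have Xab : bi *m w *m (a *m b) = bi *m b.
  by rewrite -Zb -mulmxA [w *m _]mulmxA wZ bbib.
apply: mpinv_unique; split.
- by rewrite abX -Zb mulmxA ZwZ.
- by rewrite Xab mulmxA bibbi.
- by rewrite abX.
- by rewrite Xab.
Qed.

Definition prod_mpinv m k l n
    (p : 'M[C]_(m, k)) (u : 'M_(l, n)) (a : 'M_(m, n)) : 'M_(n, m) :=
  mpinv u *m mpinv (mpinv p *m a *m mpinv u) *m mpinv p.

Lemma prod_mpinv_self_left m n g (a : 'M[C]_(m, n)) (t : 'M_(g, n)) :
  a *m mpinv t *m t = a -> prod_mpinv a t a = mpinv t *m mpinv (a *m mpinv t).
Proof.
move=> at_t; rewrite /prod_mpinv (mpinvMr (a := a) (b := mpinv t)) ?mpinvK //.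
by rewrite mulmxA.
Qed.

Lemma prod_mpinv_self_right m n h (r : 'M[C]_(m, h)) (a : 'M_(m, n)) :
  r *m mpinv r *m a = a -> prod_mpinv r a a = mpinv (mpinv r *m a) *m mpinv r.
Proof.
by move=> rr_a; rewrite /prod_mpinv (mpinvMl (a := mpinv r) (b := a)) ?mpinvK.
Qed.

End MoorePenroseMatrix.

Section TensorMatrix.
Variable C : numClosedFieldType.

Definition mx_of_tensor I J (A : tensor C I J) : 'M[C]_(#|idx I|, #|idx J|) :=
  \matrix_(i, j) A (enum_val i) (enum_val j).

Definition tensor_of_mx I J (M : 'M[C]_(#|idx I|, #|idx J|)) : tensor C I J :=
  fun i j => M (enum_rank i) (enum_rank j).

Lemma mx_of_tensor_inj I J : injective (@mx_of_tensor I J).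
Proof.
move=> A B /matrixP eqAB; apply: functional_extensionality => i.
apply: functional_extensionality => j.
by have := eqAB (enum_rank i) (enum_rank j); rewrite !mxE !enum_rankK.
Qed.

Lemma tensor_of_mxK I J : cancel (@tensor_of_mx I J) (@mx_of_tensor I J).
Proof.
by move=> M; apply/matrixP=> i j; rewrite mxE /tensor_of_mx !enum_valK.
Qed.

Lemma mx_of_einstein I K J (A : tensor C I K) (B : tensor C K J) :
  mx_of_tensor (einstein A B) = mx_of_tensor A *m mx_of_tensor B.
Proof.
apply/matrixP=> i j; rewrite !mxE /einstein.
under [RHS]eq_bigr do rewrite !mxE.
by rewrite (reindex _ (onW_bij _ (enum_val_bij (idx K)))).
Qed.

Lemma mx_of_ctrans I J (A : tensor C I J) :
  mx_of_tensor (ctrans A) = (mx_of_tensor A)^t*.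
Proof. by apply/matrixP=> i j; rewrite !mxE. Qed.

Lemma is_MP_mxE I J (A : tensor C I J) X :
  is_MP A X <-> is_mxMP (mx_of_tensor A) (mx_of_tensor X).
Proof.
rewrite /is_MP /is_mxMP -!mx_of_einstein -!mx_of_ctrans.
split; case=> h1 h2 h3 h4; split.
- by rewrite h1.
- by rewrite h2.
- by rewrite h3.
- by rewrite h4.
all: exact: mx_of_tensor_inj.
Qed.

Lemma mx_of_MPinv I J (A : tensor C I J) :
  mx_of_tensor (MPinv A) = mpinv (mx_of_tensor A).
Proof.
have MP_A : is_MP A (MPinv A).
  apply: epsilon_spec; exists (tensor_of_mx (mpinv (mx_of_tensor A))).
  by apply/is_MP_mxE; rewrite tensor_of_mxK; exact: mpinvP.
by apply/esym/mpinv_unique/is_MP_mxE.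
Qed.

Lemma mx_of_prodMP I K L J
    (P : tensor C I K) (Q : tensor C K L) (U : tensor C L J) (A : tensor C I J) :
  mx_of_tensor (prodMP P Q U A)
  = prod_mpinv (mx_of_tensor P) (mx_of_tensor U) (mx_of_tensor A).
Proof. by rewrite /prodMP !(mx_of_einstein, mx_of_MPinv). Qed.

End TensorMatrix.

Theorem theorem3p8 (C : numClosedFieldType) (I H G J : seq nat)
  (R : tensor C I H) (S : tensor C H G) (T : tensor C G J) :
  let A := einstein (einstein R S) T in
  let B := einstein (MPinv T) (MPinv (einstein A (MPinv T))) in
  let Cc := einstein (MPinv (einstein (MPinv R) A)) (MPinv R) in
  prodMP A (einstein (einstein (MPinv A) A) (MPinv T)) T A = B /\
  prodMP R (einstein (einstein (MPinv R) A) (MPinv A)) A A = Cc.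
Proof.
move=> A B Cc; split; apply: mx_of_tensor_inj;
  rewrite mx_of_prodMP /B /Cc /A !(mx_of_einstein, mx_of_MPinv).
- by rewrite prod_mpinv_self_left // mulmx_mpinvKr.
- rewrite prod_mpinv_self_right //.
  by rewrite -(mulmxA _ (mx_of_tensor S)) mulmx_mpinvKl.
Qed.
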